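(* Let $G_{K,N}$ be the graph with vertex set $\{u_{ij},b_{ij}: i\in[K], j\in[N]\}$ whose edges are exactly: $u_{ij}\sim u_{ik}$ for $j\ne k$; $b_{ij}\sim u_{ik}$ for all $j,k\in[N]$; and for each $i\in[N]$ and $j\ne k$ in $[K]$: $u_{ji}\sim u_{ki}$, $b_{ji}\sim b_{ki}$, $b_{ji}\sim u_{ki}$. For $j\in[N]$ let $U^o_j=\{u_{ij}: i\in[K]\}$ and $B^o_j=\{b_{ij}:i\in[K]\}$. Then for every $i\in[N]$, the induced subgraph $G_{K,N}\big(U^o_i\cup\bigcup_{j\in[N]}B^o_j\big)$ is perfect.
   Context: A graph is perfect if in every induced subgraph the clique number equals the chromatic number. *)

From mathcomp Require Import all_boot.
Set Implicit Arguments. Unset Strict Implicit. Unset Printing Implicit Defensive.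

Section Graphs.
Variables (T : finType) (e : rel T).

Definition is_clique (S C : {set T}) : bool :=
  (C \subset S) && [forall x in C, forall y in C, (x != y) ==> e x y].

Definition clique_number (S : {set T}) : nat :=
  \max_(C : {set T} | is_clique S C) #|C|.

Definition proper_col (S : {set T}) m (f : {ffun T -> 'I_m}) : bool :=
  [forall x in S, forall y in S, e x y ==> (f x != f y)].

(* Colours are drawn from 'I_#|T| (enough for any colouring); only the
   values on S matter, so the empty induced subgraph is 0-colourable. *)
Definition colorable (S : {set T}) (k : nat) : bool :=
  [exists f : {ffun T -> 'I_#|T|}, proper_col S f && [forall x in S, f x < k]].

(* chromatic number of G[S]: least k such that G[S] is k-colourable
   (G[S] is always #|T|-colourable, so the bound #|T| is never reached
   by the default value). *)
Definition chromatic_number (S : {set T}) : nat :=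
  \big[minn/#|T|]_(k < #|T|.+1 | colorable S k) k.

Definition perfect (A : {set T}) : Prop :=
  forall S : {set T}, S \subset A -> clique_number S = chromatic_number S.

End Graphs.

(* vertex (true, i, j) is u_{ij}, (false, i, j) is b_{ij}; i : [K], j : [N] *)
Definition GKN_vertex (K N : nat) : finType := (bool * 'I_K * 'I_N)%type.

Definition is_u K N (x : GKN_vertex K N) : bool := x.1.1.
Definition is_b K N (x : GKN_vertex K N) : bool := ~~ x.1.1.
Definition rowi K N (x : GKN_vertex K N) : 'I_K := x.1.2.
Definition colj K N (x : GKN_vertex K N) : 'I_N := x.2.

Definition GKN_rule K N (x y : GKN_vertex K N) : bool :=
  [&& is_u x, is_u y, rowi x == rowi y & colj x != colj y]
  || [&& is_b x, is_u y & rowi x == rowi y]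
  || [&& is_u x, is_u y, colj x == colj y & rowi x != rowi y]
  || [&& is_b x, is_b y, colj x == colj y & rowi x != rowi y]
  || [&& is_b x, is_u y, colj x == colj y & rowi x != rowi y].

Definition GKN_adj K N : rel (GKN_vertex K N) :=
  fun x y => GKN_rule x y || GKN_rule y x.

Definition Uo K N (j : 'I_N) : {set GKN_vertex K N} :=
  [set x | is_u x && (colj x == j)].
Definition Bo K N (j : 'I_N) : {set GKN_vertex K N} :=
  [set x | is_b x && (colj x == j)].

From mathcomp Require Import all_boot.
Set Implicit Arguments. Unset Strict Implicit. Unset Printing Implicit Defensive.

(* Inside A := U^o_i ∪ ⋃_j B^o_j two vertices are adjacent iff they lie in the
   same column, or they are u_{r,i} and b_{r,c} for some row r.  Columns are
   cliques, so for S ⊆ A with clique number m every column of S has at most m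
   vertices.  Colour column i injectively by c0 < m, then colour every other
   column injectively below m, prescribing the colour (c0(u_{r,i}) + 1) mod m
   for b_{r,c} whenever u_{r,i} ∈ S: the prescriptions are injective within a
   column, and differ from c0(u_{r,i}) because m >= 2 as soon as S has an edge. *)

Lemma exists_ltn_notin (m : nat) (s : seq nat) :
  size s < m -> exists2 k, k < m & k \notin s.
Proof.
move=> lt_s_m.
have [/allP sub|/allPn [k + k_s]] := boolP (all (mem s) (iota 0 m)).
  by have := uniq_leq_size (iota_uniq 0 m) sub; rewrite size_iota leqNgt lt_s_m.
by rewrite mem_iota => k_m; exists k.
Qed.

Lemma card_le_of_inj_bounded (T : finType) (C : {set T}) (f : T -> nat) k :
  {in C &, injective f} -> {in C, forall x, f x < k} -> #|C| <= k.
Proof.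
move=> f_inj f_lt.
have uniq_fC : uniq [seq f x | x <- enum C].
  by rewrite map_inj_in_uniq ?enum_uniq // => x y; rewrite !mem_enum; apply: f_inj.
rewrite cardE -(size_map f) -(size_iota 0 k) uniq_leq_size //.
by move=> _ /mapP [x x_C ->]; rewrite mem_iota f_lt // -mem_enum.
Qed.

Lemma bigmin_nat_le (I : eqType) (r : seq I) (P : pred I) (F : I -> nat) n j :
  j \in r -> P j -> \big[minn/n]_(i <- r | P i) F i <= F j.
Proof.
elim: r => // x r IH; rewrite inE big_cons => /orP [/eqP <-|j_r] Pj.
  by rewrite Pj geq_minl.
by case: (P x); rewrite ?geq_min IH ?orbT.
Qed.

Lemma succn_modn_neq m a : 1 < m -> a < m -> a.+1 %% m != a.
Proof.
move=> m_gt1 a_lt; rewrite modnS modn_small //.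
case: ifP => [/(dvdn_leq (ltn0Sn a)) m_le|_]; last by rewrite gtn_eqF.
by rewrite eq_sym -lt0n -ltnS (leq_trans m_gt1 m_le).
Qed.

Lemma succn_modn_inj m a b : a < m -> b < m -> a.+1 %% m = b.+1 %% m -> a = b.
Proof.
move=> a_lt b_lt /eqP; rewrite -[a.+1]addn1 -[b.+1]addn1 eqn_modDr => /eqP.
by rewrite (modn_small a_lt) (modn_small b_lt).
Qed.

Section ClassInjective.
Variables (T : finType) (I : eqType) (cls : T -> I).

Definition class_injective (A : {set T}) (g : T -> nat) :=
  {in A &, forall x y, cls x = cls y -> g x = g y -> x = y}.

(* A colouring prescribed on F extends to all of Y, one vertex at a time:
   a class of Y has at most m elements, so a free colour is always left. *)
Lemma class_injective_extension (m : nat) (Y F : {set T}) (p : T -> nat) :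
  (forall j, #|[set x in Y | cls x == j]| <= m) ->
  F \subset Y -> {in F, forall x, p x < m} -> class_injective F p ->
  exists g : T -> nat,
    [/\ {in Y, forall x, g x < m}, class_injective Y g & {in F, g =1 p}].
Proof.
move=> small_cls; move: {2}#|Y :\: F| (leqnn #|Y :\: F|) => n.
elim: n F p => [|n IH] F p le_YF sFY p_lt p_inj.
all: have [sYF|/subsetPn [x x_Y x_F]] := boolP (Y \subset F).
- exists p; split=> // [x /(subsetP sYF)|x y /(subsetP sYF) x_F /(subsetP sYF)]; [exact: p_lt|exact: p_inj].
- by move: le_YF; rewrite leqn0 cards_eq0 => /eqP/setP/(_ x); rewrite !inE x_Y x_F.
- exists p; split=> // [x /(subsetP sYF)|x y /(subsetP sYF) x_F /(subsetP sYF)]; [exact: p_lt|exact: p_inj].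
set Fx := [set y in F | cls y == cls x].
have lt_Fx : #|Fx| < m.
  have card_xFx : #|x |: Fx| = #|Fx|.+1 by rewrite cardsU1 inE (negbTE x_F).
  rewrite -card_xFx (leq_trans _ (small_cls (cls x))) // subset_leq_card //.
  by apply/subsetP => y; rewrite !inE => /orP [/eqP->|/andP [/(subsetP sFY)->->]];
    rewrite ?x_Y ?eqxx.
have [k k_lt k_fresh] : exists2 k, k < m & k \notin [seq p y | y <- enum Fx].
  by apply: exists_ltn_notin; rewrite size_map -cardE.
have fresh y : y \in F -> cls y = cls x -> p y != k.
  by move=> y_F cls_y; apply: contraNneq k_fresh => <-; rewrite map_f // mem_enum inE y_F cls_y eqxx.
pose p' y := if y == x then k else p y.
have [||||g [g_lt g_inj g_p']] := IH (x |: F) p'.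
- have -> : Y :\: (x |: F) = (Y :\: F) :\ x.
    by apply/setP => y; rewrite !inE negb_or andbA.
  by move: le_YF; rewrite (cardsD1 x (Y :\: F)) !inE x_Y x_F.
- by rewrite subUset sub1set x_Y.
- by move=> y; rewrite /p' !inE; case: eqP => //= _; apply: p_lt.
- move=> y z; rewrite !inE /p'.
  case: (eqVneq y x) => [->|y_x]; case: (eqVneq z x) => [->|z_x] //= y_F z_F.
  + by move=> cls_z /esym/eqP; rewrite (negbTE (fresh z z_F (esym cls_z))).
  + by move=> cls_y /eqP; rewrite (negbTE (fresh y y_F cls_y)).
  + exact: p_inj.
exists g; split=> // y y_F; rewrite g_p' ?inE ?y_F ?orbT // /p'.
by case: eqP y_F => // ->; rewrite (negbTE x_F).
Qed.

End ClassInjective.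

Section CliqueColouring.
Variables (T : finType) (e : rel T).
Implicit Types S C : {set T}.

Lemma is_cliqueP S C :
  reflect (C \subset S /\ {in C &, forall x y, x != y -> e x y}) (is_clique e S C).
Proof.
apply: (iffP andP) => [[sCS /forall_inP clC]|[sCS clC]]; split=> //.
  by move=> x y x_C y_C; move/forall_inP: (clC x x_C) => /(_ y y_C)/implyP.
by apply/forall_inP => x x_C; apply/forall_inP => y y_C; apply/implyP; apply: clC.
Qed.

Lemma clique_number_max S C : is_clique e S C -> #|C| <= clique_number e S.
Proof. by move=> clC; apply: (leq_bigmax_cond (P := is_clique e S)). Qed.

Lemma clique_number_witness S :
  exists2 C, is_clique e S C & clique_number e S = #|C|.
Proof.
have : 0 < #|is_clique e S|.
  by apply/card_gt0P; exists set0; apply/is_cliqueP; rewrite sub0set; split=> // x y; rewrite inE.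
by case/(eq_bigmax_cond (fun C : {set T} => #|C|)) => C; exists C.
Qed.

Lemma clique_number_gt1 S x y :
  x \in S -> y \in S -> x != y -> e x y -> e y x -> 1 < clique_number e S.
Proof.
move=> x_S y_S xy exy eyx; apply: (@leq_trans #|[set x; y]|); first by rewrite cards2 xy.
apply/clique_number_max/is_cliqueP; split.
  by apply/subsetP => z; rewrite !inE => /orP [] /eqP ->.
by move=> a b; rewrite !inE => /orP [] /eqP -> /orP [] /eqP ->; rewrite ?eqxx.
Qed.

Lemma clique_le_colours S C k : is_clique e S C -> colorable e S k -> #|C| <= k.
Proof.
move=> /is_cliqueP [sCS clC] /existsP [f /andP [/forall_inP f_proper /forall_inP f_lt]].
apply: (@card_le_of_inj_bounded _ C (fun x => val (f x))) => [x y x_C y_C /val_inj fxy|x x_C].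
  apply/eqP/negPn/negP => xy.
  have /forall_inP/(_ y (subsetP sCS y y_C)) := f_proper x (subsetP sCS x x_C).
  by rewrite clC // fxy eqxx.
exact/f_lt/(subsetP sCS).
Qed.

Lemma clique_le_chromatic_number S C : is_clique e S C -> #|C| <= chromatic_number e S.
Proof.
move=> clC; apply: (big_ind (fun v => #|C| <= v)) => [|a b|k].
- exact: max_card.
- by rewrite leq_min => -> ->.
- exact: clique_le_colours.
Qed.

Lemma chromatic_number_le S k : k <= #|T| -> colorable e S k -> chromatic_number e S <= k.
Proof.
move=> k_le col_k; rewrite -ltnS in k_le.
exact: (bigmin_nat_le val #|T| (mem_index_enum (Ordinal k_le))).
Qed.

(* enum_rank x only supplies some element of 'I_#|T|, the colour used off S. *)
Lemma colorable_of_nat_colouring S k (c : T -> nat) :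
  k <= #|T| -> {in S, forall x, c x < k} -> {in S &, forall x y, e x y -> c x != c y} ->
  colorable e S k.
Proof.
move=> k_le c_lt c_proper; pose f := [ffun x => insubd (enum_rank x) (c x)].
have val_f x : x \in S -> val (f x) = c x.
  by move=> x_S; rewrite ffunE val_insubd (leq_trans (c_lt x x_S) k_le).
apply/existsP; exists f; apply/andP; split; last first.
  by apply/forall_inP => x x_S; rewrite val_f ?c_lt.
apply/forall_inP => x x_S; apply/forall_inP => y y_S; apply/implyP => exy.
by rewrite -val_eqE !val_f ?c_proper.
Qed.

Lemma clique_number_eq_chromatic S (c : T -> nat) :
  {in S, forall x, c x < clique_number e S} ->
  {in S &, forall x y, e x y -> c x != c y} ->
  clique_number e S = chromatic_number e S.
Proof.
move=> c_lt c_proper; have [C clC cnC] := clique_number_witness S.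
rewrite cnC in c_lt *.
apply/eqP; rewrite eqn_leq (clique_le_chromatic_number clC) /=.
by rewrite chromatic_number_le ?max_card // (colorable_of_nat_colouring _ c_lt) ?max_card.
Qed.

End CliqueColouring.

Section GKN.
Variables (K N : nat) (i : 'I_N).
Implicit Types (x y : GKN_vertex K N) (j : 'I_N).

Let A := Uo K i :|: \bigcup_(j < N) Bo K j.

Definition u_of_row x : GKN_vertex K N := (true, rowi x, i).

Lemma GKN_adjC : symmetric (@GKN_adj K N).
Proof. by move=> x y; rewrite /GKN_adj orbC. Qed.

Lemma mem_Uo_bigcup_Bo x : (x \in A) = is_b x || (colj x == i).
Proof.
rewrite /A !inE; case: x => [[[] r] c]; rewrite /is_b /is_u /colj /= ?orbF.
  by apply/orP/idP => [[//|/bigcupP [j _]]|->]; [rewrite inE | left].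
by apply/bigcupP; exists c; rewrite // inE /is_b /colj /= eqxx.
Qed.

Lemma off_column_vertexE x : x \in A -> colj x != i -> x = (false, rowi x, colj x).
Proof. by case: x => [[[] r] c]; rewrite mem_Uo_bigcup_Bo //= => ->. Qed.

Lemma GKN_adj_in x y : x \in A -> y \in A ->
  GKN_adj x y = (x != y) && ((colj x == colj y) || (is_u x != is_u y) && (rowi x == rowi y)).
Proof.
rewrite !mem_Uo_bigcup_Bo.
case: x => [[bx rx] cx]; case: y => [[b_y ry] cy].
rewrite /GKN_adj /GKN_rule /is_b /is_u /rowi /colj /= !xpair_eqE.
by case: bx; case: b_y => /=;
  repeat match goal with |- context[?a == ?b] =>
    case: (eqVneq a b) => [?|?]; [subst=> //= | rewrite //=] end.
Qed.

Lemma GKN_adj_cross x y : x \in A -> y \in A -> GKN_adj x y ->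
  colj x != colj y -> colj y != i -> x = u_of_row y.
Proof.
move=> x_A y_A; rewrite GKN_adj_in // => /andP [_ + /negPf cxy y_i].
rewrite cxy (off_column_vertexE y_A y_i) /u_of_row /=.
by move: x_A; rewrite mem_Uo_bigcup_Bo; case: x {cxy} => [[[] r] c] //= /eqP-> /eqP <-.
Qed.

Section InducedColouring.
Variable S : {set GKN_vertex K N}.
Hypothesis sSA : S \subset A.
Let m := clique_number (@GKN_adj K N) S.
Let inA x : x \in S -> x \in A. Proof. exact: subsetP sSA x. Qed.

Lemma column_is_clique j : is_clique (@GKN_adj K N) S [set x in S | colj x == j].
Proof.
apply/is_cliqueP; split; first by apply/subsetP => x; rewrite inE => /andP [].
move=> x y; rewrite !inE => /andP [x_S /eqP cx] /andP [y_S /eqP cy] xy.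
by rewrite GKN_adj_in ?inA // xy cx cy eqxx.
Qed.

Lemma small_columns j : #|[set x in S | colj x == j]| <= m.
Proof. exact: clique_number_max (column_is_clique j). Qed.

Lemma exists_column_injective_colouring :
  exists2 c : GKN_vertex K N -> nat,
    {in S, forall x, c x < m} & class_injective (@colj K N) S c.
Proof.
have [|||c [c_lt c_inj _]] :=
  class_injective_extension (F := set0) (p := fun _ => 0) small_columns.
- exact: sub0set.
- by move=> x; rewrite inE.
- by move=> x; rewrite inE.
by exists c.
Qed.

Lemma exists_shifted_colouring (c0 : GKN_vertex K N -> nat) :
  {in S, forall x, c0 x < m} -> class_injective (@colj K N) S c0 ->
  exists c : GKN_vertex K N -> nat,
    [/\ {in S, forall x, c x < m}, class_injective (@colj K N) S c
      & {in S &, forall x y, x = u_of_row y -> colj y != i -> c y = (c x).+1 %% m}].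
Proof.
move=> c0_lt c0_inj.
pose p x := if colj x == i then c0 x else (c0 (u_of_row x)).+1 %% m.
have [|||c [c_lt c_inj c_p]] := class_injective_extension
    (F := [set x in S | (colj x == i) || (u_of_row x \in S)]) (p := p) small_columns.
- by apply/subsetP => x; rewrite inE => /andP [].
- move=> x; rewrite inE /p => /andP [x_S]; case: ifP => [_ _|_ /= u_S]; first exact: c0_lt.
  by rewrite ltn_pmod // (leq_ltn_trans (leq0n _) (c0_lt _ u_S)).
- move=> x y; rewrite !inE /p => /andP [x_S x_F] /andP [y_S y_F] cxy.
  rewrite -cxy in y_F *; case: ifP x_F y_F => [_ _ _|/negbT x_i /= ux_S uy_S].
    exact: c0_inj.
  move/(succn_modn_inj (c0_lt _ ux_S) (c0_lt _ uy_S))/(c0_inj _ _ ux_S uy_S erefl) => [r_xy].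
  have y_i : colj y != i by rewrite -cxy.
  by rewrite (off_column_vertexE (inA x_S) x_i) (off_column_vertexE (inA y_S) y_i) r_xy cxy.
exists c; split=> // x y x_S y_S x_uy y_i.
have x_i : colj x == i by rewrite x_uy.
rewrite !c_p ?inE ?x_S ?y_S ?x_i -?x_uy ?x_S ?orbT //.
by rewrite /p x_i (negbTE y_i) -x_uy.
Qed.

Lemma exists_proper_colouring :
  exists2 c : GKN_vertex K N -> nat, {in S, forall x, c x < m}
    & {in S &, forall x y, GKN_adj x y -> c x != c y}.
Proof.
have [c0 c0_lt c0_inj] := exists_column_injective_colouring.
have [c [c_lt c_inj c_next]] := exists_shifted_colouring c0_lt c0_inj.
have cross x y : x \in S -> y \in S -> GKN_adj x y ->
    colj x != colj y -> colj y != i -> c x != c y.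
  move=> x_S y_S exy cxy y_i; have x_uy := GKN_adj_cross (inA x_S) (inA y_S) exy cxy y_i.
  have m_gt1 : 1 < m.
    apply: (clique_number_gt1 x_S y_S _ exy); last by rewrite GKN_adjC.
    by apply: contraNneq cxy => ->.
  by rewrite (c_next x y) // eq_sym succn_modn_neq ?c_lt.
exists c => // x y x_S y_S exy.
have [cxy|cxy] := eqVneq (colj x) (colj y).
  have xy : x != y by move: exy; rewrite GKN_adj_in ?inA // => /andP [].
  by apply: contra_neq xy; apply: c_inj.
have [y_i|y_i] := eqVneq (colj y) i; last exact: cross.
rewrite eq_sym; apply: cross => //; [by rewrite GKN_adjC | by rewrite eq_sym | by rewrite -y_i].
Qed.

End InducedColouring.

End GKN.

Theorem lemma6 (K N : nat) (i : 'I_N) :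
  perfect (@GKN_adj K N) (Uo K i :|: \bigcup_(j < N) Bo K j).
Proof.
move=> S sSA; have [c c_lt c_proper] := exists_proper_colouring sSA.
exact: clique_number_eq_chromatic c_lt c_proper.
Qed.
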